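(* Let $\mathcal{H}=\mathcal{H}_{\mathcal{Y}}\times\mathcal{H}_{n+1}$ be closed under scaling, let $c\in(0,1)$, let $\ell$ be a loss on $\mathcal{H}_{\mathcal{Y}}\times\mathcal{X}\times\mathcal{Y}$, and let $\Phi\colon\mathbb{R}\to\mathbb{R}$ be a decreasing function with $\lim_{t\to+\infty}\Phi(t)=0$ and $\Phi(t)\ge\mathbb{1}_{t\le0}$ for all $t\in\mathbb{R}$. Let $\mathcal{D}$ be a distribution over $\mathcal{X}\times\mathcal{Y}$, and assume $\hat h=(\hat h_{\mathcal{Y}},\hat h_{n+1})\in\mathcal{H}$ satisfies $\mathcal{E}_{\ell}(\hat h_{\mathcal{Y}})=\inf_{h_{\mathcal{Y}}\in\mathcal{H}_{\mathcal{Y}}}\mathcal{E}_{\ell}(h_{\mathcal{Y}})$ and $\mathcal{E}_{\ell_{\hat h_{\mathcal{Y}}}}(\hat h_{n+1})=\inf_{h=(h_{\mathcal{Y}},h_{n+1})\in\mathcal{H}}\mathcal{E}_{\ell_{h_{\mathcal{Y}}}}(h_{n+1})$. If there exists $h^*=(h^*_{\mathcal{Y}},h^*_{n+1})\in\mathcal{H}$ with $\mathcal{E}_{\mathsf{L}_{\mathrm{abs}}}(h^* )=0$, then $\mathcal{E}_{\mathsf{L}_{\mathrm{abs}}}(\hat h)=0$.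
   Context: Let $\mathcal{X}$ be an input space and $\mathcal{Y}=\{1,\dots,n\}$, $n\ge2$. $\mathcal{H}_{\mathcal{Y}}$ is a set of functions $h_{\mathcal{Y}}\colon\mathcal{X}\times\mathcal{Y}\to\mathbb{R}$ and $\mathcal{H}_{n+1}$ a set of functions $h_{n+1}\colon\mathcal{X}\to\mathbb{R}$; a pair $h=(h_{\mathcal{Y}},h_{n+1})$ is identified with the function on $\mathcal{X}\times(\mathcal{Y}\cup\{n+1\})$ given by $h(x,y)=h_{\mathcal{Y}}(x,y)$ for $y\in\mathcal{Y}$ and $h(x,n+1)=h_{n+1}(x)$. $\mathcal{H}$ is closed under scaling if $\alpha h\in\mathcal{H}$ for all $h\in\mathcal{H}$ and $\alpha\in\mathbb{R}$. $\mathsf{h}_{\mathcal{Y}}(x)=\operatorname{argmax}_{y\in\mathcal{Y}}h_{\mathcal{Y}}(x,y)$ (ties broken by a fixed deterministic rule). The predicted label $\mathsf{h}(x)$ is $n+1$ if $h_{n+1}(x)\ge\max_{y\in\mathcal{Y}}h_{\mathcal{Y}}(x,y)$, and $\mathsf{h}_{\mathcal{Y}}(x)$ otherwise. The abstention loss with constant cost $c$ is $\mathsf{L}_{\mathrm{abs}}(h,x,y)=\mathbb{1}_{\mathsf{h}(x)\neq y}\mathbb{1}_{\mathsf{h}(x)\neq n+1}+c\,\mathbb{1}_{\mathsf{h}(x)=n+1}$. For fixed $h_{\mathcal{Y}}$, the second-stage surrogate is $\ell_{h_{\mathcal{Y}}}(h_{n+1},x,y)=\mathbb{1}_{\mathsf{h}_{\mathcal{Y}}(x)\neq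 y}\,\Phi\big(h_{n+1}(x)-\max_{y'\in\mathcal{Y}}h_{\mathcal{Y}}(x,y')\big)+c\,\Phi\big(\max_{y'\in\mathcal{Y}}h_{\mathcal{Y}}(x,y')-h_{n+1}(x)\big)$. For a loss $\mathsf{L}$, $\mathcal{E}_{\mathsf{L}}(g)=\mathbb{E}_{(x,y)\sim\mathcal{D}}[\mathsf{L}(g,x,y)]$. *)

From HB Require Import structures.
From mathcomp Require Import all_boot all_order all_algebra.
From mathcomp Require Import all_classical all_reals all_analysis.
Set Implicit Arguments. Unset Strict Implicit. Unset Printing Implicit Defensive.
Import Order.TTheory GRing.Theory Num.Theory.
Local Open Scope ring_scope.
Local Open Scope classical_set_scope.

(* Label set Y = {1,...,n}, represented by 0,...,n-1.  Under the standing
   hypothesis 2 <= n, 'I_n.-1.+1 is exactly 'I_n; the .-1.+1 form only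
   provides the default element ord0 needed for the pointed structure. *)
Definition label (n : nat) : Type := 'I_n.-1.+1.
HB.instance Definition _ n := Finite.on (label n).
HB.instance Definition _ n := isPointed.Build (label n) (@ord0 n.-1).
Section disc.
Variable n : nat.
HB.instance Definition _ := @isMeasurable.Build default_measure_display
  (label n) discrete_measurable (@discrete_measurable0 _)
  (@discrete_measurableC _) (@discrete_measurableU _).
End disc.

Section defs.
Variables (R : realType) (X : Type) (n : nat).

Definition hmax (hY : X -> label n -> R) (x : X) : R :=
  \big[Num.max/hY x ord0]_(y : label n) hY x y.

Definition hargmax (hY : X -> label n -> R) (x : X) : label n :=
  [arg min_(i < ord0 | hY x i == hmax hY x) (i : nat)].

(* predicted label of h = (h_Y, h_{n+1}); None stands for the abstention label n+1 *)
Definition hpred (hY : X -> label n -> R) (hn : X -> R) (x : X) : option (label n) :=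
  if hmax hY x <= hn x then None else Some (hargmax hY x).

Definition Labs (c : R) (hY : X -> label n -> R) (hn : X -> R) (x : X) (y : label n) : R :=
  ((hpred hY hn x != Some y) && (hpred hY hn x != None))%:R
  + c * (hpred hY hn x == None)%:R.

Definition surr2 (Phi : R -> R) (c : R) (hY : X -> label n -> R) (hn : X -> R)
  (x : X) (y : label n) : R :=
  (hargmax hY x != y)%:R * Phi (hn x - hmax hY x) + c * Phi (hmax hY x - hn x).
End defs.

Definition expL (R : realType) (d : measure_display) (X : measurableType d) (n : nat)
  (D : probability (X * label n)%type R) (L : X -> label n -> R) : \bar R :=
  (\int[D]_z (L z.1 z.2)%:E)%E.

(* Since Phi dominates the indicator of (-oo, 0], the abstention loss lies
   pointwise below the second-stage surrogate, so the abstention risk of hat h is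
   at most its surrogate risk, i.e. the infimum of the surrogate risk over H.
   A realizable h* classifies almost every (x, y) correctly with a positive margin
   max_y h*_Y(x, y) - h*_{n+1}(x); there the surrogate loss of k h* is
   c Phi (k * margin), which tends to 0 as k -> +oo and is bounded by c Phi 0.
   As H is closed under scaling, dominated convergence forces that infimum, hence
   the abstention risk of hat h, to vanish. *)

From HB Require Import structures.
From mathcomp Require Import all_boot all_order all_algebra.
From mathcomp Require Import all_classical all_reals all_analysis.
From mathcomp Require Import measurable_realfun.
Import Order.TTheory GRing.Theory Num.Theory numFieldNormedType.Exports.
Local Open Scope ring_scope.
Local Open Scope classical_set_scope.

Section measurable_combinations.
Context {d : measure_display} {X : measurableType d} {R : realType}.

Lemma measurable_fun_natr (b : X -> bool) : measurable_fun setT b ->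
  measurable_fun setT (fun x => (b x)%:R : R).
Proof.
move=> mb; have mnatr : measurable_fun setT (fun t : bool => t%:R : R) by [].
exact: measurableT_comp mnatr mb.
Qed.

Lemma measurable_fun_ffun_bool {T : finType} (B : T -> X -> bool)
    (F : {ffun T -> bool} -> bool) :
  (forall i, measurable_fun setT (B i)) ->
  measurable_fun setT (fun x => F [ffun i => B i x]).
Proof.
move=> mB; apply: (measurable_fun_bool true); rewrite setTI.
have -> : (fun x => F [ffun i => B i x]) @^-1` [set true] =
    \bigcup_(b in [set b | F b]) \bigcap_(i in setT) (B i @^-1` [set b i]).
  apply/seteqP; split => [x /= Fx|x [b /= Fb Bb]].
    by exists [ffun i => B i x] => // i _; rewrite /= ffunE.
  suff -> : [ffun i => B i x] = b by [].
  by apply/ffunP => i; rewrite ffunE; exact: Bb.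
apply: fin_bigcup_measurable => [|b _]; first exact: finite_finset.
apply: fin_bigcap_measurable => [|i _]; first exact: finite_finset.
by have := mB i measurableT [set b i] I; rewrite setTI.
Qed.

Lemma measurable_fun_bigmaxr (I : Type) (s : seq I) (F : I -> X -> R)
    (a : X -> R) :
  measurable_fun setT a -> (forall i, measurable_fun setT (F i)) ->
  measurable_fun setT (fun x => \big[Num.max/a x]_(i <- s) F i x).
Proof.
move=> ma mF; elim: s => [|i s IH]; first by under eq_fun do rewrite big_nil.
by under eq_fun do rewrite big_cons; exact: measurable_maxr.
Qed.

Lemma measurable_fun_uncurry_label (n : nat) (F : X -> label n -> R) :
  (forall y, measurable_fun setT (F ^~ y)) ->
  measurable_fun setT (fun z : X * label n => F z.1 z.2).
Proof.
move=> mF _ A mA; rewrite setTI.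
have -> : (fun z : X * label n => F z.1 z.2) @^-1` A =
    \bigcup_(y in setT) ((F ^~ y) @^-1` A `*` [set y]).
  apply/seteqP; split => [[x y] /= Fxy|[x y] [y' _ [/= Fxy ->]]] //.
  by exists y.
apply: fin_bigcup_measurable => [|y _]; first exact: finite_finset.
apply: measurableX => //.
by have := mF y measurableT A mA; rewrite setTI.
Qed.

End measurable_combinations.

Section predictor.
Context {R : realType} {X : Type} {n : nat}.
Implicit Types (hY : X -> label n -> R) (hn : X -> R) (x : X) (y : label n).

Definition first_label (b : {ffun label n -> bool}) : label n :=
  [arg min_(i < ord0 | b i) (i : nat)].

(* The argmax depends on x only through the finitely many tests
   [hY x i == hmax hY x], which is what makes it measurable. *)
Lemma hargmaxE hY x : hargmax hY x = first_label [ffun i => hY x i == hmax hY x].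
Proof.
rewrite /hargmax /first_label; congr (arg_min _ _ _).
by apply/funext => i; rewrite ffunE.
Qed.

Lemma hmax_scale (a : R) hY x : 0 <= a ->
  hmax (fun x y => a * hY x y) x = a * hmax hY x.
Proof.
move=> a0; rewrite /hmax (big_morph (fun v => a * v) (id1 := a * hY x ord0)
  (op1 := Num.max) (op2 := Num.max)) // => u v.
by rewrite maxr_pMr.
Qed.

Lemma hargmax_scale (a : R) hY x : 0 < a ->
  hargmax (fun x y => a * hY x y) x = hargmax hY x.
Proof.
move=> a0; rewrite !hargmaxE hmax_scale ?ltW //; congr (first_label _).
by apply: eq_ffun => i; rewrite (inj_eq (mulfI (lt0r_neq0 a0))).
Qed.

Lemma LabsE (c : R) hY hn x y : Labs c hY hn x y =
  (~~ (hmax hY x <= hn x)%R && (hargmax hY x != y))%:R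
  + c * ((hmax hY x <= hn x)%R : bool)%:R.
Proof. by rewrite /Labs /hpred; case: ifP => //=; rewrite andbT. Qed.

Lemma Labs_ge0 (c : R) hY hn x y : 0 <= c -> 0 <= Labs c hY hn x y.
Proof. by move=> c0; rewrite LabsE addr_ge0 ?mulr_ge0. Qed.

Lemma Labs_eq0 (c : R) hY hn x y : 0 < c -> Labs c hY hn x y = 0 ->
  hn x < hmax hY x /\ hargmax hY x = y.
Proof.
move=> c0; rewrite LabsE; have [_|hnx] /= := leP (hmax hY x) (hn x).
  by rewrite add0r mulr1 => c_eq0; rewrite c_eq0 ltxx in c0.
by rewrite mulr0 addr0; case: eqP => // _ /eqP; rewrite oner_eq0.
Qed.

Lemma Labs_le_surr2 (Phi : R -> R) (c : R) hY hn x y :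
  (forall t : R, ((t <= 0)%R : bool)%:R <= Phi t) -> 0 <= c ->
  Labs c hY hn x y <= surr2 Phi c hY hn x y.
Proof.
move=> Phi_ge c_ge0.
have Phi_ge1 t : t <= 0 -> 1 <= Phi t.
  by move=> t_le0; have := Phi_ge t; rewrite t_le0.
have Phi_ge0 t : 0 <= Phi t by apply: le_trans (Phi_ge t).
rewrite LabsE /surr2; have [|hnx] /= := leP (hmax hY x) (hn x).
  rewrite -subr_le0 => /Phi_ge1 Phi1; rewrite add0r mulr1 -[l in l <= _]add0r.
  by rewrite lerD ?mulr_ge0 // ler_peMr.
have /Phi_ge1 Phi1 : hn x - hmax hY x <= 0 by rewrite subr_le0 ltW.
rewrite mulr0 addr0 -[l in l <= _]addr0 lerD ?mulr_ge0 //.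
by rewrite ler_peMr // ler0n.
Qed.

Lemma surr2_scale_argmaxE (Phi : R -> R) (c a : R) hY hn x y : 0 < a ->
  hargmax hY x = y ->
  surr2 Phi c (fun x y => a * hY x y) (fun x => a * hn x) x y
  = c * Phi (a * (hmax hY x - hn x)).
Proof.
move=> a0 argmax_y; rewrite /surr2 hmax_scale ?hargmax_scale ?ltW //.
by rewrite argmax_y eqxx mul0r add0r mulrBr.
Qed.

End predictor.

Section measurable_losses.
Context {d : measure_display} {X : measurableType d} {R : realType} {n : nat}.
Context {hY : X -> label n -> R} {hn : X -> R}.
Hypotheses (mhY : forall y, measurable_fun setT (hY ^~ y))
  (mhn : measurable_fun setT hn).

Let mhmax : measurable_fun setT (hmax hY).
Proof. exact: measurable_fun_bigmaxr. Qed.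

Let mhargmax_eq y : measurable_fun setT (fun x => hargmax hY x == y).
Proof.
under eq_fun do rewrite hargmaxE.
apply: (measurable_fun_ffun_bool (fun i x => hY x i == hmax hY x)
  (fun b => first_label b == y)) => i.
exact: measurable_fun_eqr.
Qed.

Lemma measurable_Labs (c : R) :
  measurable_fun setT (fun z : X * label n => Labs c hY hn z.1 z.2).
Proof.
apply: measurable_fun_uncurry_label => y; under eq_fun do rewrite LabsE.
have mle : measurable_fun setT (fun x => hmax hY x <= hn x).
  exact: measurable_fun_ler.
apply: measurable_funD; last exact/measurable_funM/measurable_fun_natr.
by apply/measurable_fun_natr/measurable_and; apply: measurable_neg.
Qed.

Lemma measurable_surr2 (Phi : R -> R) (c : R) :
  (forall s t, s <= t -> Phi t <= Phi s) ->
  measurable_fun setT (fun z : X * label n => surr2 Phi c hY hn z.1 z.2).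
Proof.
move=> Phi_decr; apply: measurable_fun_uncurry_label => y.
have mPhi : measurable_fun setT Phi :=
  nonincreasing_measurable measurableT Phi_decr.
apply: measurable_funD; last first.
  by apply/measurable_funM/(measurableT_comp mPhi)/measurable_funB.
apply: measurable_funM; first exact/measurable_fun_natr/measurable_neg.
by apply/(measurableT_comp mPhi)/measurable_funB.
Qed.

End measurable_losses.

Lemma ereal_inf_le_cvg {R : realType} (S : set (\bar R)) (u : nat -> \bar R) l :
  (forall k, S (u k)) -> u @ \oo --> l -> (ereal_inf S <= l)%E.
Proof.
move=> Su ul; rewrite -(cvg_lim _ ul) //; apply: lime_ge; first exact: cvgP ul.
by apply: nearW => k; exact: ereal_inf_lbound.
Qed.

Lemma cvg_comp_scale_pinfty {R : realType} (f : R -> R) (l a : R) : 0 < a ->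
  f t @[t --> +oo] --> l -> f (k.+1%:R * a) @[k --> \oo] --> l.
Proof.
move=> a0; apply: cvg_comp; apply/cvgryPge => A.
have /cvgryPge/(_ (A / a)) := @cvgr_idn R; apply: filterS => k.
rewrite ler_pdivrMr // => /le_trans; apply.
by rewrite ler_pM2r // ler_nat.
Qed.

Section expected_losses.
Context {d : measure_display} {X : measurableType d} {R : realType} {n : nat}.
Context {D : probability (X * label n)%type R}.

Lemma le_expL (L1 L2 : X -> label n -> R) :
  measurable_fun setT (fun z : X * label n => L1 z.1 z.2) ->
  measurable_fun setT (fun z : X * label n => L2 z.1 z.2) ->
  (forall x y, 0 <= L1 x y) -> (forall x y, L1 x y <= L2 x y) ->
  (expL D L1 <= expL D L2)%E.
Proof.
move=> mL1 mL2 L1_ge0 L12.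
apply: ge0_le_integral => //= [z _|||z _]; rewrite ?lee_fin //.
  exact/measurable_EFinP.
exact/measurable_EFinP.
Qed.

Lemma expL_ge0 (L : X -> label n -> R) :
  (forall x y, 0 <= L x y) -> (0 <= expL D L)%E.
Proof. by move=> L_ge0; apply: integral_ge0 => z _; rewrite lee_fin. Qed.

Lemma expL_eq0_ae (L : X -> label n -> R) :
  measurable_fun setT (fun z : X * label n => L z.1 z.2) ->
  (forall x y, 0 <= L x y) -> expL D L = 0%E -> {ae D, forall z, L z.1 z.2 = 0}.
Proof.
move=> mL L_ge0 EL0.
have : ae_eq D setT (fun z => (L z.1 z.2)%:E) (cst 0%E).
  apply/(ae_eq_integral_abs _ measurableT); first exact/measurable_EFinP.
  by rewrite -EL0; apply: eq_integral => z _; rewrite gee0_abs ?lee_fin.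
by apply: filterS => z /(_ I) [].
Qed.

Lemma expL_Labs_eq0_ae {c : R} {hY : X -> label n -> R} {hn : X -> R} : 0 < c ->
  (forall y, measurable_fun setT (hY ^~ y)) -> measurable_fun setT hn ->
  expL D (Labs c hY hn) = 0%E ->
  {ae D, forall z, hn z.1 < hmax hY z.1 /\ hargmax hY z.1 = z.2}.
Proof.
move=> c_gt0 mhY mhn /expL_eq0_ae Labs0.
have Labs_nneg x y : 0 <= Labs c hY hn x y by exact/Labs_ge0/ltW.
move: (Labs0 (measurable_Labs mhY mhn c) Labs_nneg); apply: filterS => z.
exact: Labs_eq0.
Qed.

Section surrogate_risk.
Context {Phi : R -> R} {c : R}.
Hypotheses (Phi_decr : forall s t, s <= t -> Phi t <= Phi s)
  (Phi_lim : Phi t @[t --> +oo] --> 0)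
  (Phi_ge : forall t : R, ((t <= 0)%R : bool)%:R <= Phi t)
  (c_ge0 : 0 <= c).

Lemma expL_Labs_le_surr2 {hY : X -> label n -> R} {hn : X -> R} :
  (forall y, measurable_fun setT (hY ^~ y)) -> measurable_fun setT hn ->
  (expL D (Labs c hY hn) <= expL D (surr2 Phi c hY hn))%E.
Proof.
move=> mhY mhn; apply: le_expL => [| |x y|x y].
- exact: measurable_Labs.
- exact: measurable_surr2.
- exact: Labs_ge0.
- exact: Labs_le_surr2.
Qed.

Lemma expL_surr2_scale_cvg0 {hY : X -> label n -> R} {hn : X -> R} :
  (forall y, measurable_fun setT (hY ^~ y)) -> measurable_fun setT hn ->
  {ae D, forall z, hn z.1 < hmax hY z.1 /\ hargmax hY z.1 = z.2} ->
  expL D (surr2 Phi c (fun x y => k.+1%:R * hY x y) (fun x => k.+1%:R * hn x))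
    @[k --> \oo] --> 0%E.
Proof.
move=> mhY mhn correct.
have Phi_ge0 t : 0 <= Phi t by apply: le_trans (Phi_ge t).
pose f k (z : X * label n) := (surr2 Phi c (fun x y => k.+1%:R * hY x y)
  (fun x => k.+1%:R * hn x) z.1 z.2)%:E.
have fE : {ae D, forall z k,
    f k z = (c * Phi (k.+1%:R * (hmax hY z.1 - hn z.1)))%:E}.
  by apply: filterS correct => z [_ argmax_z] k; rewrite /f surr2_scale_argmaxE.
have mf k : measurable_fun setT (f k).
  apply/measurable_EFinP; apply: measurable_surr2 Phi_decr => [y|];
  exact: measurable_funM.
have f_cvg0 : {ae D, forall z, setT z -> f ^~ z @ \oo --> cst 0%E z}.
  apply: filterS2 correct fE => z [margin _] fzE _.
  rewrite (funext fzE); apply: cvg_EFin; first exact: nearW.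
  rewrite /comp /= -(mulr0 c).
  by apply: cvgMl_tmp; apply: cvg_comp_scale_pinfty; rewrite ?subr_gt0.
have f_dom : {ae D, forall z k, setT z -> (`|f k z| <= (c * Phi 0)%:E)%E}.
  apply: filterS2 correct fE => z [margin _] fzE k _.
  rewrite fzE gee0_abs ?lee_fin ?mulr_ge0 // ler_wpM2l // Phi_decr //.
  by rewrite mulr_ge0 // subr_ge0 ltW.
have dom_int : D.-integrable setT (cst (c * Phi 0)%:E).
  exact: finite_measure_integrable_cst.
have [_ _ cvg_int] := dominated_convergence measurableT mf (measurable_cst _)
  f_cvg0 dom_int f_dom.
by rewrite integral0 in cvg_int.
Qed.

End surrogate_risk.
End expected_losses.

Theorem theorem5 (R : realType) (d : measure_display) (X : measurableType d)
  (n : nat) (hn2 : (2 <= n)%N)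
  (HY : set (X -> label n -> R)) (Hn : set (X -> R))
  (Hmeas_Y : forall hY, HY hY -> forall y, measurable_fun setT (fun x => hY x y))
  (Hmeas_n : forall hn, Hn hn -> measurable_fun setT hn)
  (Hscale : forall hY hn (a : R), HY hY -> Hn hn ->
     HY (fun x y => a * hY x y) /\ Hn (fun x => a * hn x))
  (c : R) (hc0 : 0 < c) (hc1 : c < 1)
  (ell : (X -> label n -> R) -> X -> label n -> R)
  (Phi : R -> R)
  (Phi_decr : forall s t, s <= t -> Phi t <= Phi s)
  (Phi_lim : Phi t @[t --> +oo] --> 0)
  (Phi_ge : forall t : R, ((t <= 0)%R : bool)%:R <= Phi t)
  (D : probability (X * label n)%type R)
  (hatY : X -> label n -> R) (hatn : X -> R)
  (hat_in : HY hatY /\ Hn hatn)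
  (hat_first : expL D (ell hatY) = ereal_inf [set expL D (ell hY) | hY in HY])
  (hat_second : expL D (surr2 Phi c hatY hatn)
     = ereal_inf [set expL D (surr2 Phi c h.1 h.2) | h in HY `*` Hn])
  (realizable : exists hsY hsn, [/\ HY hsY, Hn hsn & expL D (Labs c hsY hsn) = 0%E]) :
  expL D (Labs c hatY hatn) = 0%E.
Proof.
have [hsY [hsn [HsY Hsn Labs_s0]]] := realizable.
have [HhatY Hhatn] := hat_in.
have c_ge0 : 0 <= c := ltW hc0.
have correct := expL_Labs_eq0_ae hc0 (Hmeas_Y _ HsY) (Hmeas_n _ Hsn) Labs_s0.
have surr2_hat_le0 : (expL D (surr2 Phi c hatY hatn) <= 0)%E.
  rewrite hat_second; apply: ereal_inf_le_cvg
    (expL_surr2_scale_cvg0 Phi_decr Phi_lim Phi_ge c_ge0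
      (Hmeas_Y _ HsY) (Hmeas_n _ Hsn) correct) => k.
  exists (fun x y => k.+1%:R * hsY x y, fun x => k.+1%:R * hsn x) => //.
  exact: Hscale.
have Labs_hat_le := expL_Labs_le_surr2 (D := D) Phi_decr Phi_ge c_ge0
  (Hmeas_Y _ HhatY) (Hmeas_n _ Hhatn).
apply/eqP; rewrite eq_le (le_trans Labs_hat_le surr2_hat_le0) /=.
by apply: expL_ge0 => x y; exact: Labs_ge0.
Qed.
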